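(* Consider the Rayleigh fading channel $y=hx+v$, $v\sim\mathcal{CN}(0,1)$, perfect CSI at transmitter and receiver, $|h|^2$ exponential with unit mean. Let $\mathcal{A}(\mathrm{SNR})\ge1$ be a PAPR depending on $\mathrm{SNR}$, and let $\lambda_0=\lambda_0(\mathrm{SNR})$ be the water-filling level defined by $\mathrm{SNR}=\mathbf{E}[[1/\lambda_0-1/|h|^2]^+]$. Suppose the peak constraint is effective, i.e. $\mathcal{A}(\mathrm{SNR})\,\mathrm{SNR}<1/\lambda_0$ for all small $\mathrm{SNR}$. Let $\lambda=\lambda(\mathrm{SNR})$, with $\lambda\,\mathcal{A}(\mathrm{SNR})\,\mathrm{SNR}<1$, be determined by $$\mathrm{SNR}=\mathbf{E}\left[\min\left\{\left[\frac1\lambda-\frac1{|h|^2}\right]^+,\ \mathcal{A}(\mathrm{SNR})\,\mathrm{SNR}\right\}\right].$$ Then (1) $\mathcal{A}(\mathrm{SNR})\,\mathrm{SNR}\to0$ as $\mathrm{SNR}\to0$; and (2) if moreover $\mathcal{A}(\mathrm{SNR})\to\infty$ as $\mathrm{SNR}\to0$, then $\lambda\to\infty$ as $\mathrm{SNR}\to0$.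
   Context: $[u]^+=\max\{0,u\}$. The water-filling allocation $[1/\lambda_0-1/|h|^2]^+$ is the optimal power allocation without a peak constraint; its peak power is $1/\lambda_0$, and $1/\lambda_0\to0$ as $\mathrm{SNR}\to0$. *)

From Stdlib Require Import Reals Lra.
Open Scope R_scope.

Definition posp (u : R) : R := Rmax 0 u.

(* Expect phi v : for G = |h|^2 ~ Exp(1) (density exp(-g) on [0,oo)),
   E[phi(G)] = v, as the improper Riemann integral
   lim_{b -> oo} int_0^b phi(g) exp(-g) dg = v. *)
Definition Expect (phi : R -> R) (v : R) : Prop :=
  forall eps : R, 0 < eps -> exists B : R, forall b : R, B <= b ->
    exists pr : Riemann_integrable (fun g => phi g * exp (- g)) 0 b,
      Rabs (RiemannInt pr - v) < eps.

(* Both limits come from one crude lower bound on an expectation under the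
   Exp(1) law: if a nonnegative function is at least c on a window (a, a+1),
   its expectation is at least c e^{-(a+1)}.  For the water-filling integrand
   with level x, the window (2/x, 2/x + 1) carries the value x/2.

   (1) If A s * s >= eps then 1/lam0 > eps, so the window bound gives
   s >= (eps/2) e^{-(2/eps+1)}, impossible for small s.
   (2) If lam s <= L, the truncated integrand equals the peak A s * s on the
   window (2L, 2L+1) as soon as A s * s < 1/(2L), which holds for small s by
   (1); then s >= A s * s e^{-(2L+1)}, i.e. A s <= e^{2L+1}, contradicting
   A s -> oo. *)
From Stdlib Require Import Reals Lra.
Open Scope R_scope.

Lemma RiemannInt_ge_const (F : R -> R) a b c (pr : Riemann_integrable F a b) :
  a <= b -> (forall x, a < x < b -> c <= F x) -> c * (b - a) <= RiemannInt pr.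
Proof.
  intros Hab HF.
  rewrite <- (RiemannInt_P15 (RiemannInt_P14 a b c)).
  apply RiemannInt_P19; auto.
Qed.

Lemma RiemannInt_ge_window (F : R -> R) a b c (pr : Riemann_integrable F 0 b) :
  0 <= a -> a + 1 <= b ->
  (forall x, 0 < x < b -> 0 <= F x) ->
  (forall x, a < x < a + 1 -> c <= F x) -> c <= RiemannInt pr.
Proof.
  intros Ha Hb HF0 HFc.
  assert (H0ab : 0 <= a <= b) by lra.
  assert (Haab : a <= a + 1 <= b) by lra.
  pose (pr_right := RiemannInt_P23 pr H0ab).
  pose (pr_head := RiemannInt_P22 pr H0ab).
  pose (pr_window := RiemannInt_P22 pr_right Haab).
  pose (pr_tail := RiemannInt_P23 pr_right Haab).
  rewrite <- (RiemannInt_P26 pr_head pr_right pr).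
  rewrite <- (RiemannInt_P26 pr_window pr_tail pr_right).
  assert (Ihead := RiemannInt_ge_const F 0 a 0 pr_head Ha
                     ltac:(intros; apply HF0; lra)).
  assert (Iwindow := RiemannInt_ge_const F a (a + 1) c pr_window ltac:(lra) HFc).
  assert (Itail := RiemannInt_ge_const F (a + 1) b 0 pr_tail ltac:(lra)
                     ltac:(intros; apply HF0; lra)).
  lra.
Qed.

Lemma Expect_ge_window (f : R -> R) v a c :
  0 <= a -> (forall g, 0 < g -> 0 <= f g) ->
  (forall g, a < g < a + 1 -> c <= f g) -> Expect f v ->
  c * exp (- (a + 1)) <= v.
Proof.
  intros Ha Hf0 Hfc HE.
  apply Rnot_lt_le; intros Hlt.
  destruct (HE (c * exp (- (a + 1)) - v) ltac:(lra)) as [B HB].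
  destruct (HB (Rmax B (a + 1)) (Rmax_l _ _)) as [pr Hpr].
  assert (Hint : c * exp (- (a + 1)) <= RiemannInt pr).
  { apply (RiemannInt_ge_window _ a); auto using Rmax_r.
    - intros x Hx. apply Rmult_le_pos; [apply Hf0; lra | left; apply exp_pos].
    - intros x Hx.
      assert (Hexp : exp (- (a + 1)) <= exp (- x)) by (left; apply exp_increasing; lra).
      assert (0 < exp (- (a + 1))) by apply exp_pos.
      assert (c <= f x) by (apply Hfc; lra).
      assert (0 <= f x) by (apply Hf0; lra).
      destruct (Rle_or_lt 0 c); [apply Rmult_le_compat; lra | nra]. }
  apply Rabs_def2 in Hpr. lra.
Qed.

Lemma posp_waterfill_ge (c x g : R) :
  0 < c -> c <= x -> 2 / c < g -> c / 2 <= posp (x - / g).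
Proof.
  intros Hc Hcx Hg.
  assert (H2c : 0 < 2 / c) by (apply Rdiv_lt_0_compat; lra).
  assert (Hinv : / g < / (2 / c)) by (apply Rinv_lt_contravar; nra).
  replace (/ (2 / c)) with (c / 2) in Hinv by (field; lra).
  unfold posp. eapply Rle_trans; [| apply Rmax_r]. lra.
Qed.

Lemma waterfill_level_ge (lam0 P s eps : R) :
  0 < eps -> Expect (fun g => posp (/ lam0 - / g)) s ->
  eps <= P -> P < / lam0 -> eps / 2 * exp (- (2 / eps + 1)) <= s.
Proof.
  intros Heps HE HP Hpeak.
  apply (Expect_ge_window (fun g => posp (/ lam0 - / g)) s (2 / eps));
    [| | | exact HE].
  - left; apply Rdiv_lt_0_compat; lra.
  - intros; apply Rmax_l.
  - intros g Hg. apply posp_waterfill_ge; lra.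
Qed.

Lemma peak_level_ge (lam P s L : R) :
  0 < lam <= L -> 0 <= P < / (2 * L) ->
  Expect (fun g => Rmin (posp (/ lam - / g)) P) s ->
  P * exp (- (2 * L + 1)) <= s.
Proof.
  intros Hlam HP HE.
  assert (HinvL : / L <= / lam) by (apply Rinv_le_contravar; lra).
  assert (H2L : 2 / / L = 2 * L) by (field; lra).
  apply (Expect_ge_window (fun g => Rmin (posp (/ lam - / g)) P) s (2 * L));
    [lra | | | exact HE].
  - intros g Hg. apply Rmin_glb; [apply Rmax_l | lra].
  - intros g Hg. apply Rmin_glb; [| lra].
    assert (Hw := posp_waterfill_ge (/ L) (/ lam) g
                    ltac:(apply Rinv_0_lt_compat; lra) HinvL ltac:(lra)).
    replace (/ (2 * L)) with (/ L / 2) in HP by (field; lra). lra.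
Qed.

Lemma peak_power_vanishes (lam0 P : R -> R) (delta : R) :
  0 < delta ->
  (forall s, 0 < s < delta ->
     Expect (fun g => posp (/ lam0 s - / g)) s /\ P s < / lam0 s) ->
  forall eps, 0 < eps -> exists d, 0 < d /\ forall s, 0 < s < d -> P s < eps.
Proof.
  intros Hdelta H eps Heps.
  set (c := eps / 2 * exp (- (2 / eps + 1))).
  assert (Hc : 0 < c) by (unfold c; assert (0 < exp (- (2 / eps + 1))) by apply exp_pos; nra).
  exists (Rmin delta c); split; [now apply Rmin_glb_lt |].
  intros s Hs.
  assert (Hsd := Rmin_l delta c). assert (Hsc := Rmin_r delta c).
  destruct (H s ltac:(lra)) as (HE & Hpeak).
  apply Rnot_le_lt; intros HP.
  assert (Hle := waterfill_level_ge (lam0 s) (P s) s eps Heps HE HP Hpeak).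
  fold c in Hle. lra.
Qed.

Lemma peak_level_unbounded (A lam : R -> R) (delta : R) :
  0 < delta ->
  (forall s, 0 < s < delta -> 0 <= A s * s /\ 0 < lam s /\
     Expect (fun g => Rmin (posp (/ lam s - / g)) (A s * s)) s) ->
  (forall eps, 0 < eps -> exists d, 0 < d /\ forall s, 0 < s < d -> A s * s < eps) ->
  (forall M, exists d, 0 < d /\ forall s, 0 < s < d -> M < A s) ->
  forall M, exists d, 0 < d /\ forall s, 0 < s < d -> M < lam s.
Proof.
  intros Hdelta H Hpeak HA M.
  set (L := Rmax M 1).
  assert (HL1 : 1 <= L) by apply Rmax_r.
  assert (HLM : M <= L) by apply Rmax_l.
  destruct (Hpeak (/ (2 * L)) ltac:(apply Rinv_0_lt_compat; lra)) as [d1 [Hd1 Hsmall]].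
  destruct (HA (exp (2 * L + 1))) as [d2 [Hd2 Hlarge]].
  exists (Rmin delta (Rmin d1 d2)); split; [now repeat apply Rmin_glb_lt |].
  intros s Hs.
  assert (Hm := Rmin_l delta (Rmin d1 d2)). assert (Hm' := Rmin_r delta (Rmin d1 d2)).
  assert (Hm1 := Rmin_l d1 d2). assert (Hm2 := Rmin_r d1 d2).
  destruct (H s ltac:(lra)) as (HP & Hlam & HE).
  assert (HPs := Hsmall s ltac:(lra)). assert (HAs := Hlarge s ltac:(lra)).
  apply Rnot_le_lt; intros HlamM.
  assert (Hle := peak_level_ge (lam s) (A s * s) s L ltac:(lra) ltac:(lra) HE).
  assert (Hexp : exp (2 * L + 1) * exp (- (2 * L + 1)) = 1)
    by (rewrite <- exp_plus, Rplus_opp_r; apply exp_0).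
  assert (Hpos : 0 < exp (- (2 * L + 1))) by apply exp_pos.
  assert (HAle : A s * exp (- (2 * L + 1)) <= 1)
    by (apply (Rmult_le_reg_r s); [lra | nra]).
  assert (Hgap := Rmult_lt_compat_r _ _ _ Hpos HAs).
  lra.
Qed.

Theorem lemma3 (A lam0 lam : R -> R) (delta : R) :
  0 < delta ->
  (* standing assumptions for all small SNR s in (0, delta) *)
  (forall s, 0 < s < delta ->
     1 <= A s /\
     (* water-filling level *)
     0 < lam0 s /\ Expect (fun g => posp (/ lam0 s - / g)) s /\
     (* peak constraint is effective *)
     A s * s < / lam0 s /\
     (* peak-constrained level *)
     0 < lam s /\ lam s * A s * s < 1 /\
     Expect (fun g => Rmin (posp (/ lam s - / g)) (A s * s)) s) ->
  (* (1) A(SNR) SNR -> 0 as SNR -> 0 *)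
  (forall eps, 0 < eps -> exists d, 0 < d /\
     forall s, 0 < s < d -> Rabs (A s * s) < eps) /\
  (* (2) if A(SNR) -> oo then lambda -> oo *)
  ((forall M, exists d, 0 < d /\ forall s, 0 < s < d -> M < A s) ->
   forall M, exists d, 0 < d /\ forall s, 0 < s < d -> M < lam s).
Proof.
  intros Hdelta H.
  assert (Hpeak := peak_power_vanishes lam0 (fun s => A s * s) delta Hdelta
    ltac:(intros s Hs; destruct (H s Hs) as (_ & _ & ? & ? & _); auto)).
  split.
  - intros eps Heps.
    destruct (Hpeak eps Heps) as [d [Hd Hsmall]].
    exists (Rmin delta d); split; [now apply Rmin_glb_lt |].
    intros s Hs.
    assert (Hsd := Rmin_l delta d). assert (Hsd' := Rmin_r delta d).
    destruct (H s ltac:(lra)) as (HA & _).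
    rewrite Rabs_pos_eq by nra. apply Hsmall; lra.
  - apply (peak_level_unbounded A lam delta Hdelta); [| exact Hpeak].
    intros s Hs; destruct (H s Hs) as (HA & _ & _ & _ & Hlam & _ & HE).
    repeat split; auto; nra.
Qed.
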